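(* Let $G$ be a finite median graph and let $m$ be the maximum dimension of a hypercube contained in $G$. Then $C(G,x)=\sum_{i=0}^m b_i(G)(x+1)^i$, where $b_0(G)=1$ and $b_i(G)$ is a positive integer for each $0\le i\le m$.
   Context: A median of vertices $u,v,w$ of a graph is a vertex lying simultaneously on a shortest $u,v$-path, a shortest $u,w$-path and a shortest $v,w$-path; a (connected) graph is a median graph if every triple of vertices has a unique median. The cube polynomial of $G$ is $C(G,x)=\sum_{i\ge0}\alpha_i(G)x^i$, where $\alpha_i(G)$ is the number of induced subgraphs of $G$ isomorphic to the $i$-dimensional hypercube $Q_i$. *)

(* A finite simple graph is a symmetric irreflexive relation
   e : rel T on a finType T. *)
From mathcomp Require Import all_boot all_order all_algebra.
Set Implicit Arguments. Unset Strict Implicit. Unset Printing Implicit Defensive.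
Import GRing.Theory.
Local Open Scope ring_scope.

Section Graphs.
Variables (T : finType) (e : rel T).

(* p is a walk from u to v (u :: p is the vertex sequence, size p its length) *)
Definition walk (u v : T) (p : seq T) : bool := path e u p && (last u p == v).

Definition shortest_path (u v : T) (p : seq T) : Prop :=
  walk u v p /\ forall q : seq T, walk u v q -> (size p <= size q)%N.

Definition on_shortest (u v x : T) : Prop :=
  exists p : seq T, shortest_path u v p /\ x \in u :: p.

Definition is_median (u v w x : T) : Prop :=
  on_shortest u v x /\ on_shortest u w x /\ on_shortest v w x.

Definition connected_graph : Prop :=
  (0 < #|T|)%N /\ forall u v : T, exists p : seq T, walk u v p.

Definition median_graph : Prop :=
  connected_graph /\ forall u v w : T, exists! x : T, is_median u v w x.

Definition qadj (i : nat) (a b : {ffun 'I_i -> bool}) : bool :=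
  #|[set k | a k != b k]| == 1%N.

Definition induces_cube (i : nat) (S : {set T}) : bool :=
  [exists f : {ffun {ffun 'I_i -> bool} -> T},
     [&& injectiveb f, f @: setT == S &
         [forall a, forall b, e (f a) (f b) == qadj a b]]].

Definition alpha (i : nat) : nat := #|[set S : {set T} | induces_cube i S]|.

(* cube polynomial; alpha_i = 0 for i > #|T| since 2^i > i *)
Definition cube_poly : {poly int} := \poly_(i < #|T|.+1) (alpha i)%:R.

Definition cube_dim : nat := \max_(i < #|T|.+1 | (0 < alpha i)%N) (i : nat).

End Graphs.

From mathcomp Require Import all_boot all_order all_algebra zify.
Set Implicit Arguments. Unset Strict Implicit. Unset Printing Implicit Defensive.

(* Fix a base vertex z and call the neighbours of v that are closer to z its
   down-neighbours.  A median graph is bipartite, has no induced K_{2,3} and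
   satisfies the quadrangle property.  Consequently every induced cube has a
   unique vertex farthest from z, its top, and the cube is determined by its top
   v together with the neighbours of v in the cube, which are down-neighbours of
   v; conversely any i down-neighbours of v span an induced i-cube with top v,
   obtained by completing squares downwards.  Hence
   alpha_i = sum_v binomial(|Dn v|, i), that is C(G, x) = sum_v (x + 1)^|Dn v|,
   and b_i is the number of vertices of down-degree i.  Only z has down-degree
   0, and when z is a corner of a maximum cube Q_m the vertices of that cube
   realise all down-degrees 0, ..., m, because the down-degree of a vertex never
   exceeds its distance to z. *)

Section FinSetFacts.
Variable I : finType.
Implicit Types (B C : {set I}) (k j : I).

Lemma setU1D B k : k \notin B -> (k |: B) :\: B = [set k].
Proof.
move=> kB; apply/setP => x; rewrite !inE.
by case: (eqVneq x k) => [->|_] /=; rewrite ?kB ?andNb.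
Qed.

Lemma setDU1r C B k : C :\: (k |: B) = (C :\: B) :\ k.
Proof. by apply/setP => x; rewrite !inE negb_or -!andbA; case: (x == k). Qed.

Lemma card_setD1 B k : k \in B -> #|B :\ k| = #|B|.-1.
Proof. by move=> kB; rewrite (cardsD1 k B) kB. Qed.

Lemma ltn_card_setD1 B C k : k \in C -> C \subset B -> (#|C :\ k| < #|B|)%N.
Proof.
by move=> kC CB; apply: leq_trans (proper_card (properD1 kC)) (subset_leq_card CB).
Qed.

Lemma setU1_setD B C k : B \subset C -> C :\: B = [set k] -> k |: B = C.
Proof.
move=> BC <-; apply/setP => x; rewrite !inE.
by case: (boolP (x \in B)) => [/(subsetP BC)->|_] /=; rewrite ?orbT ?orbF.
Qed.

Lemma setD1_set1 B k j : j \in B :\ k -> B :\ k :\ j = set0 -> B :\ k = [set j].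
Proof.
move=> jBk E; apply/setP => x; rewrite inE; case: eqVneq => [->//|xj].
apply/negbTE/negP => xBk; have : x \in B :\ k :\ j by rewrite in_setD1 xj.
by rewrite E inE.
Qed.

Lemma setD1C B k j : B :\ k :\ j = B :\ j :\ k.
Proof. by rewrite !setDDl setUC. Qed.

Definition symdiff B C := [set x | (x \in B) (+) (x \in C)].
Definition hamming B C := #|symdiff B C|.

Lemma hammingE B C : hamming B C = #|B :\: C| + #|C :\: B|.
Proof.
rewrite /hamming -cardsUI (_ : (B :\: C) :&: (C :\: B) = set0) ?cards0 ?addn0.
  by apply: eq_card => x; rewrite !inE; case: (x \in B); case: (x \in C).
by apply/setP => x; rewrite !inE; case: (x \in B); case: (x \in C).
Qed.

Lemma symdiff_shift B C D : symdiff (symdiff B D) (symdiff C D) = symdiff B C.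
Proof.
apply/setP => x; rewrite !inE.
by case: (x \in B); case: (x \in C); case: (x \in D).
Qed.

Lemma symdiffK B D : symdiff (symdiff B D) D = B.
Proof. by apply/setP => x; rewrite !inE -addbA addbb addbF. Qed.

Lemma symdiff0B B : symdiff set0 B = B.
Proof. by apply/setP => x; rewrite !inE. Qed.

Lemma symdiffBT B : symdiff B setT = ~: B.
Proof. by apply/setP => x; rewrite !inE addbT. Qed.

Lemma hammingC B C : hamming B C = hamming C B.
Proof. by apply: eq_card => x; rewrite !inE addbC. Qed.

Lemma hamming_eq0 B C : (hamming B C == 0%N) = (B == C).
Proof.
rewrite cards_eq0; apply/eqP/eqP => [/setP E|->]; last first.
  by apply/setP => x; rewrite !inE addbb.
by apply/setP => x; have := E x; rewrite !inE; case: (x \in B); case: (x \in C).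
Qed.

Lemma hamming0B B : hamming set0 B = #|B|.
Proof. by rewrite /hamming symdiff0B. Qed.

Lemma hammingU1 B k : k \notin B -> hamming B (k |: B) = 1%N.
Proof.
move=> kB; rewrite hammingE setU1D // cards1 (_ : B :\: _ = set0) ?cards0 //.
by rewrite setDUr setDv setI0.
Qed.

Lemma hammingD1 B k : k \in B -> hamming (B :\ k) B = 1%N.
Proof. by move=> kB; rewrite -{2}(setD1K kB) hammingU1 // setD11. Qed.

Lemma hamming2_setU C1 C2 : #|C1| = #|C2| -> hamming C1 C2 = 2 ->
  [/\ hamming C1 (C1 :|: C2) = 1%N, hamming C2 (C1 :|: C2) = 1%N
    & #|C1 :|: C2| = #|C1|.+1].
Proof.
have hamU A A' : hamming A (A :|: A') = #|A' :\: A|.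
  by rewrite hammingE setDUr setDv set0I cards0 setDUl setDv set0U.
move=> cC; rewrite hammingE => h2.
rewrite hamU cardsU (setUC C1 C2) hamU.
move: h2; rewrite !cardsD (setIC C2 C1) -cC.
by have := subset_leq_card (subsetIl C1 C2); split; lia.
Qed.

End FinSetFacts.

Section Graph.
Variables (T : finType) (e : rel T).
Hypotheses (e_sym : symmetric e) (e_irr : irreflexive e).
Hypothesis connected : forall u v, exists p, walk e u v p.

Lemma walk_cat u v w p q : walk e u v p -> walk e v w q -> walk e u w (p ++ q).
Proof.
rewrite /walk => /andP[pp /eqP lp] /andP[pq /eqP lq].
by rewrite cat_path pp lp pq last_cat lp lq eqxx.
Qed.

Lemma walk_rev u v p : walk e u v p -> walk e v u (rev (belast u p)).
Proof.
rewrite /walk => /andP[pp /eqP <-].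
have e_symr : (fun x y => e y x) =2 e by move=> x y; rewrite e_sym.
rewrite rev_path (eq_path e_symr) pp /=.
by case: p {pp} => //= x p; rewrite rev_cons last_rcons.
Qed.

Lemma walk_exists u v : exists n, [exists t : n.-tuple T, walk e u v t].
Proof.
have [p Hp] := connected u v.
by exists (size p); apply/existsP; exists (in_tuple p).
Qed.

Definition dist u v := ex_minn (walk_exists u v).

Lemma distP u v : exists2 p, walk e u v p & size p = dist u v.
Proof.
rewrite /dist; case: ex_minnP => n /existsP[t Ht] _.
by exists t; rewrite ?size_tuple.
Qed.

Lemma dist_leq_size u v p : walk e u v p -> (dist u v <= size p)%N.
Proof.
move=> Hp; rewrite /dist; case: ex_minnP => n _; apply.
by apply/existsP; exists (in_tuple p).
Qed.

Lemma distC u v : dist u v = dist v u.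
Proof.
have le_dist x y : (dist x y <= dist y x)%N.
  have [p /walk_rev Hp <-] := distP y x.
  by rewrite -(size_belast y) -size_rev dist_leq_size.
by apply/eqP; rewrite eqn_leq !le_dist.
Qed.

Lemma dist_triangle u v w : (dist u w <= dist u v + dist v w)%N.
Proof.
have [p Hp <-] := distP u v; have [q Hq <-] := distP v w.
by rewrite -size_cat dist_leq_size // (walk_cat Hp Hq).
Qed.

Lemma distxx u : dist u u = 0%N.
Proof.
by apply/eqP; rewrite -leqn0 (@dist_leq_size u u [::]) // /walk /= eqxx.
Qed.

Lemma dist0_eq u v : dist u v = 0%N -> u = v.
Proof. by have [[|x p] /andP[_ /eqP] //= <- <-] := distP u v. Qed.

Lemma edgeE u v : e u v = (dist u v == 1%N).
Proof.
apply/idP/eqP => [uv|].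
  apply/eqP; rewrite eqn_leq (@dist_leq_size u v [:: v]) /=; last first.
    by rewrite /walk /= uv eqxx.
  by rewrite lt0n; apply: contraTneq uv => /dist0_eq ->; rewrite e_irr.
case: (distP u v) => [[|x [|y p]] Hw <-] //= _.
by case/andP: Hw => /= /andP[ux _] /eqP <-.
Qed.

Lemma dist_edge u v : e u v -> dist u v = 1%N.
Proof. by rewrite edgeE => /eqP. Qed.

Lemma dist_first_step u v : u != v -> exists2 x, e u x & (dist x v).+1 = dist u v.
Proof.
move=> uv; have [[|x p] Hp Sp] := distP u v.
  by move: Hp uv; rewrite /walk /= => /eqP ->; rewrite eqxx.
case/andP: Hp => /= /andP[ux px] lp; exists x => //.
have := dist_leq_size (_ : walk e x v p); rewrite /walk px lp => /(_ isT).
have := dist_triangle u x v; rewrite (dist_edge ux) -Sp /=; lia.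
Qed.

Lemma dist_two u v x : u != v -> ~~ e u v -> e x u -> e x v -> dist u v = 2.
Proof.
move=> uv nuv xu xv.
have le2 : (dist u v <= 2)%N.
  by have := dist_triangle u x v; rewrite (distC u x) (dist_edge xu) (dist_edge xv).
have ne0 : dist u v != 0%N by apply: contra uv => /eqP/dist0_eq ->.
have ne1 : dist u v != 1%N by rewrite -edgeE.
lia.
Qed.

Lemma shortest_pathE u v p :
  shortest_path e u v p <-> walk e u v p /\ size p = dist u v.
Proof.
split=> [[Hw Hmin]|[Hw Sp]]; last by split=> // q /dist_leq_size; rewrite Sp.
split=> //; apply/eqP; rewrite eqn_leq dist_leq_size // andbT.
by have [q /Hmin ? <-] := distP u v.
Qed.

Lemma on_shortestE u v x : on_shortest e u v x <-> dist u x + dist x v = dist u v.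
Proof.
split=> [[p [/shortest_pathE [Hw Sp] Hx]]|Hx].
  case/splitPl: Hx Hw Sp => p1 p2 Hl.
  rewrite /walk cat_path last_cat -Hl => /andP[/andP[h1 h2] h3] Sp.
  apply/eqP; rewrite eqn_leq dist_triangle andbT -Sp size_cat leq_add //.
    by apply: dist_leq_size; rewrite /walk h1 Hl eqxx.
  by apply: dist_leq_size; rewrite /walk h2 h3.
have [p Hp Sp] := distP u x; have [q Hq Sq] := distP x v.
exists (p ++ q); split.
  by apply/shortest_pathE; rewrite size_cat Sp Sq (walk_cat Hp Hq).
case/andP: Hp => _ /eqP <-.
by rewrite -cat_cons lastI mem_cat mem_rcons mem_head.
Qed.

Definition induced_cube (I : finType) (Y : {set I} -> T) :=
  injective Y /\ forall B C, e (Y B) (Y C) = (hamming B C == 1%N).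

Section BitsOfSets.
Variable i : nat.

Definition set_of_bits (p : {ffun 'I_i -> bool}) : {set 'I_i} := [set k | p k].
Definition bits_of_set (B : {set 'I_i}) : {ffun 'I_i -> bool} := [ffun k => k \in B].

Lemma bits_of_setK : cancel bits_of_set set_of_bits.
Proof. by move=> B; apply/setP => k; rewrite !inE ffunE. Qed.

Lemma set_of_bitsK : cancel set_of_bits bits_of_set.
Proof. by move=> p; apply/ffunP => k; rewrite !ffunE inE. Qed.

Lemma qadjE p q : qadj p q = (hamming (set_of_bits p) (set_of_bits q) == 1%N).
Proof.
rewrite /qadj /hamming; congr (_ == _); apply: eq_card => k; rewrite !inE.
by case: (p k); case: (q k).
Qed.

Lemma induces_cubeP (S : {set T}) :
  induces_cube e i S <-> exists Y : {set 'I_i} -> T, induced_cube Y /\ S = Y @: setT.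
Proof.
split=> [/existsP[f /and3P[/injectiveP f_inj /eqP fS /forallP f_e]]|[Y [[Y_inj Y_e] ->]]].
  exists (f \o bits_of_set); split; first split.
  - exact: inj_comp f_inj (can_inj bits_of_setK).
  - by move=> B C /=; have /forallP/(_ (bits_of_set C))/eqP -> := f_e (bits_of_set B);
      rewrite qadjE !bits_of_setK.
  - rewrite -fS; apply/setP => y; apply/imsetP/imsetP => [[p _ ->]|[B _ ->]].
      by exists (set_of_bits p); rewrite //= set_of_bitsK.
    by exists (bits_of_set B).
apply/existsP; exists [ffun p => Y (set_of_bits p)]; apply/and3P; split.
- apply/injectiveP => p q; rewrite !ffunE => /Y_inj.
  exact: (can_inj set_of_bitsK).
- apply/eqP/setP => y; apply/imsetP/imsetP => [[p _ ->]|[B _ ->]].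
    by exists (set_of_bits p); rewrite ?ffunE.
  by exists (bits_of_set B); rewrite ?ffunE ?bits_of_setK.
- by apply/forallP => p; apply/forallP => q; rewrite !ffunE Y_e qadjE.
Qed.

End BitsOfSets.

Section Median.
Hypothesis median : forall u v w, exists! x, is_median e u v w x.
Local Notation d := dist.

Definition median3 u v w x := [/\ d u x + d x v = d u v,
  d u x + d x w = d u w & d v x + d x w = d v w].

Lemma median3_exists u v w : exists x, median3 u v w x.
Proof.
have [x [[/on_shortestE ? [/on_shortestE ? /on_shortestE ?]] _]] := median u v w.
by exists x.
Qed.

Lemma median3_unique u v w x y : median3 u v w x -> median3 u v w y -> x = y.
Proof.
have [m [_ m_uniq]] := median u v w.
have is_med z : median3 u v w z -> is_median e u v w z.
  by case=> *; split; [|split]; apply/on_shortestE.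
by move=> /is_med/m_uniq <- /is_med/m_uniq.
Qed.

(* The median of w, a, b for an edge ab is a or b, so median graphs are bipartite. *)
Lemma dist_edge_succ w a b : e a b -> d w b = (d w a).+1 \/ d w a = (d w b).+1.
Proof.
move=> ab; have [m [h1 h2]] := median3_exists w a b.
rewrite (dist_edge ab) => h3.
have [/dist0_eq Em|/dist0_eq Em] : d a m = 0%N \/ d m b = 0%N by lia.
  by move: h2 h3; rewrite -Em distxx; lia.
by move: h1 h2 h3; rewrite Em distxx (distC b a); lia.
Qed.

Lemma eq_dist_nonadj w a b : d w a = d w b -> ~~ e a b.
Proof. by move=> Eab; apply/negP => /(dist_edge_succ w); lia. Qed.

Lemma dist_two_level w x a b : a != b -> d w a = d w b -> e x a -> e x b -> d a b = 2.
Proof. by move=> ab /eq_dist_nonadj; apply: dist_two. Qed.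

Lemma no_K23 x1 x2 c1 c2 c3 : x1 != x2 ->
  c1 != c2 -> c1 != c3 -> c2 != c3 ->
  e x1 c1 -> e x1 c2 -> e x1 c3 -> e x2 c1 -> e x2 c2 -> e x2 c3 ->
  ~~ e c1 c2 -> ~~ e c1 c3 -> ~~ e c2 c3 -> False.
Proof.
move=> x12 c12 c13 c23 a1 a2 a3 b1 b2 b3 n12 n13 n23.
have med x : e x c1 -> e x c2 -> e x c3 -> median3 c1 c2 c3 x.
  move=> h1 h2 h3; rewrite /median3 (dist_two c12 n12 h1 h2).
  rewrite (dist_two c13 n13 h1 h3) (dist_two c23 n23 h2 h3).
  by rewrite !(distC _ x) !dist_edge.
by move/eqP: x12; apply; apply: median3_unique (med _ a1 a2 a3) (med _ b1 b2 b3).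
Qed.

Lemma no_K23_level w x1 x2 c1 c2 c3 :
  c1 != c2 -> c1 != c3 -> c2 != c3 -> d w c1 = d w c2 -> d w c1 = d w c3 ->
  e x1 c1 -> e x1 c2 -> e x1 c3 -> e x2 c1 -> e x2 c2 -> e x2 c3 ->
  d w x1 != d w x2 -> False.
Proof.
move=> c12 c13 c23 h12 h13 a1 a2 a3 b1 b2 b3 x12.
apply: (no_K23 _ c12 c13 c23 a1 a2 a3 b1 b2 b3).
- by apply: contra x12 => /eqP ->.
- exact: (eq_dist_nonadj h12).
- exact: (eq_dist_nonadj h13).
- by apply: (eq_dist_nonadj (w := w)); rewrite -h12 h13.
Qed.

Lemma median_of_dist2 u1 u2 u3 : d u1 u2 = 2 -> d u1 u3 = 2 -> d u2 u3 = 2 ->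
  exists m, [/\ e u1 m, e u2 m & e u3 m].
Proof.
move=> d12 d13 d23; have [m [m1 m2 m3]] := median3_exists u1 u2 u3.
exists m; rewrite !edgeE; move: m1 m2 m3; rewrite d12 d13 d23 !(distC m).
by split; apply/eqP; lia.
Qed.

Section Quadrangle.
Variable z : T.
Local Notation h := (d z).

Lemma quadrangle x a b : e x a -> e x b -> a != b -> h a = h b -> (h a).+1 = h x ->
  exists c, [/\ e a c, e b c & (h c).+1 = h a].
Proof.
move=> xa xb ab Eab Ha.
have [m [h1 h2 h3]] := median3_exists z a b.
have Em : d m a = d m b by apply/eqP; rewrite -(eqn_add2l (h m)) h1 h2 Eab.
rewrite (dist_two_level ab Eab xa xb) (distC a) Em in h3.
have Em1 : d m b = 1%N by lia.
have Ema : d m a = 1%N by rewrite Em.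
by exists m; rewrite !(e_sym _ m) !edgeE Ema Em1 -h1 Ema addn1.
Qed.

Lemma lower_nbr_unique x y c c' : x != y -> e x c -> e y c -> e x c' -> e y c' ->
  (h c).+1 = h x -> (h c').+1 = h x -> h y = h x -> c = c'.
Proof.
move=> xy xc yc xc' yc' Hc Hc' Ey.
have dxy : d x y = 2 by apply: (dist_two_level (w := z) (x := c)); rewrite 1?e_sym.
have med u : e x u -> e y u -> (h u).+1 = h x -> median3 z x y u.
  move=> xu yu Hu; rewrite /median3 dxy !(distC u) (dist_edge xu) (dist_edge yu).
  by split; lia.
exact: median3_unique (med _ xc yc Hc) (med _ xc' yc' Hc').
Qed.

Lemma upper_nbr_unique x y t t' : x != y -> e x t -> e y t -> e x t' -> e y t' ->
  (h x).+1 = h t -> (h x).+1 = h t' -> h y = h x -> t = t'.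
Proof.
move=> xy xt yt xt' yt' Ht Ht' Ey.
apply/eqP; apply: contraT => tt'.
have [c [xc yc Hc]] : exists c, [/\ e x c, e y c & (h c).+1 = h x].
  by apply: (quadrangle (x := t)); rewrite 1?e_sym // ?Ey // eq_sym.
have nadj u w : (h u).+1 = h x -> (h x).+1 = h w -> ~~ e u w.
  by move=> Hu Hw; apply/negP => /(dist_edge_succ z); lia.
exfalso; apply: (no_K23 xy tt' _ _ xt xt' xc yt yt' yc).
- by apply/eqP => Ec; rewrite Ec in Ht; lia.
- by apply/eqP => Ec; rewrite Ec in Ht'; lia.
- by apply: (eq_dist_nonadj (w := z)); rewrite -Ht -Ht'.
- by rewrite e_sym nadj.
- by rewrite e_sym nadj.
Qed.

End Quadrangle.

Section CubeMap.
Variables (I : finType) (X : {set I} -> T).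

Definition subset_isometric :=
  forall B C : {set I}, B \subset C -> d (X B) (X C) = #|C :\: B|.
Definition up_injective := forall (B : {set I}) k j,
  k \notin B -> j \notin B -> k != j -> X (k |: B) != X (j |: B).

Hypotheses (X_iso : subset_isometric) (X_inj : up_injective).
Implicit Types (B C : {set I}).

Lemma edge_setU1 B k : k \notin B -> e (X B) (X (k |: B)).
Proof. by move=> kB; rewrite edgeE X_iso ?subsetUr // setU1D ?cards1. Qed.

Lemma closer_up_nbr n C B y : #|C :\: B| = n -> B \subset C ->
  e (X B) y -> (d y (X C)).+1 = n -> exists2 k, k \in C :\: B & y = X (k |: B).
Proof.
elim: n B y => [|[|n] IH] B y // Hn BC By Hy.
  have /cards1P[k Ek] : #|C :\: B| == 1 by rewrite Hn.
  have -> : y = X C by apply: dist0_eq; case: Hy.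
  by exists k; rewrite ?Ek ?set11 ?(setU1_setD BC Ek).
case: (boolP [exists k in C :\: B, y == X (k |: B)]) => [/exists_inP[k ? /eqP]|Hno].
  by exists k.
have [k kCB] : exists k, k \in C :\: B by apply/set0Pn; rewrite -cards_eq0 Hn.
have [kC kB] := setDP kCB.
pose yk := X (k |: B).
have ne_y k' : k' \in C :\: B -> y != X (k' |: B).
  by move=> k'CB; apply: contra Hno => Ek'; apply/exists_inP; exists k'.
have dC k' : k' \in C :\: B -> d (X C) (X (k' |: B)) = n.+1.
  move=> k'CB; have [k'C _] := setDP k'CB.
  rewrite distC X_iso; last by rewrite subUset sub1set k'C BC.
  by rewrite setDU1r card_setD1 // Hn.
have dCB : d (X C) (X B) = n.+2 by rewrite distC X_iso.
have dCy : d (X C) y = n.+1 by rewrite distC; case: Hy.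
have [m [ykm ym Hm]] : exists m, [/\ e yk m, e y m & (d (X C) m).+1 = d (X C) yk].
  apply: (quadrangle (edge_setU1 kB) By); first by rewrite eq_sym ne_y.
    by rewrite dC // dCy.
  by rewrite dC // dCB.
have [j jCkB Em] : exists2 j, j \in C :\: (k |: B) & m = X (j |: (k |: B)).
  apply: (IH _ _ _ _ ykm).
  - by rewrite setDU1r card_setD1 // Hn.
  - by rewrite subUset sub1set kC BC.
  - by rewrite distC Hm dC.
move: jCkB; rewrite setDU1r !inE => /and3P[jk jB jC].
have jCB : j \in C :\: B by rewrite inE jB jC.
exfalso; apply: (no_K23_level (w := X C) (x1 := X B) (x2 := m) (ne_y k kCB) (ne_y j jCB)).
- by rewrite X_inj // eq_sym.
- by rewrite dCy dC.
- by rewrite dCy dC.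
- exact: By.
- exact: edge_setU1.
- exact: edge_setU1.
- by rewrite e_sym.
- by rewrite e_sym.
- by rewrite Em setUCA e_sym edge_setU1 // !inE negb_or kB eq_sym jk.
- by move: Hm; rewrite /yk dCB dC // => -[->]; rewrite gtn_eqF // ltnW.
Qed.

Lemma cube_dist_hamming B C : d (X B) (X C) = hamming B C.
Proof.
pose S := B :&: C.
have SB : S \subset B by apply: subsetIl.
have SC : S \subset C by apply: subsetIr.
have dSB : d (X S) (X B) = #|B :\: C| by rewrite X_iso // /S setDIr setDv set0U.
have dSC : d (X S) (X C) = #|C :\: B| by rewrite X_iso // /S setDIr setDv setU0.
have [m [m1 m2 m3]] := median3_exists (X S) (X B) (X C).
suff Em : m = X S by rewrite hammingE -dSB -dSC -m3 Em distC.
apply/eqP; rewrite eq_sym; apply: contraT => Sm.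
have [y Sy Hy] := dist_first_step Sm.
have closer (D : {set I}) : S \subset D -> d (X S) m + d m (X D) = d (X S) (X D) ->
    exists2 k, k \in D :\: S & y = X (k |: S).
  move=> SD mD; apply: (closer_up_nbr erefl SD Sy).
  rewrite -X_iso //; apply/eqP; rewrite eqn_leq.
  have := dist_triangle y m (X D); have := dist_triangle (X S) y (X D).
  rewrite (dist_edge Sy); lia.
have [k /setDP[kB kS] Ek] := closer B SB m1.
have [l /setDP[lC lS] El] := closer C SC m2.
have kl : k != l by apply: contraNneq kS => kl; rewrite !inE kB kl lC.
by move: (X_inj kS lS kl); rewrite -Ek -El eqxx.
Qed.

End CubeMap.

Lemma isometric_induced_cube (I : finType) (X : {set I} -> T) :
  subset_isometric X -> up_injective X -> induced_cube X.
Proof.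
move=> X_iso X_inj; split=> [B C EX|B C]; last by rewrite edgeE cube_dist_hamming.
by apply/eqP; rewrite -hamming_eq0 -(cube_dist_hamming X_iso X_inj) EX distxx.
Qed.

Section InducedCube.
Variable I : finType.
Implicit Types (Y : {set I} -> T) (B C D : {set I}).

Lemma induced_cube_shift Y D : induced_cube Y -> induced_cube (fun B => Y (symdiff B D)).
Proof.
case=> Y_inj Y_e; split=> [B C /Y_inj E|B C].
  by rewrite -(symdiffK B D) E symdiffK.
by rewrite Y_e /hamming symdiff_shift.
Qed.

Lemma induced_cube_dist0 Y B : induced_cube Y -> d (Y set0) (Y B) = #|B|.
Proof.
case=> Y_inj Y_e; have [n] := ubnP #|B|.
elim: n B => // n IH B ltBn.
case E: #|B| => [|[|m]].
- by move/eqP: E; rewrite cards_eq0 => /eqP ->; rewrite distxx.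
- by move/eqP/cards1P: E => [k ->]; rewrite dist_edge // Y_e hamming0B cards1.
have [k kB] : exists k, k \in B by apply/set0Pn; rewrite -cards_eq0 E.
have [l lBk] : exists l, l \in B :\ k by apply/set0Pn; rewrite -cards_eq0 card_setD1 // E.
have [lk lB] := setD1P lBk.
have cBk : #|B :\ k| = m.+1 by rewrite card_setD1 // E.
have cBl : #|B :\ l| = m.+1 by rewrite card_setD1 // E.
have cBkl : #|B :\ k :\ l| = m by rewrite card_setD1 // cBk.
have dBk : d (Y set0) (Y (B :\ k)) = m.+1 by rewrite IH cBk //; lia.
have dBl : d (Y set0) (Y (B :\ l)) = m.+1 by rewrite IH cBl //; lia.
have dBkl : d (Y set0) (Y (B :\ k :\ l)) = m by rewrite IH cBkl //; lia.
have eBk : e (Y (B :\ k)) (Y B) by rewrite Y_e hammingD1.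
have [//|dB] := dist_edge_succ (Y set0) eBk; first by rewrite dBk ?E.
exfalso; have : Y B = Y (B :\ k :\ l).
  apply: (lower_nbr_unique (z := Y set0) (x := Y (B :\ k)) (y := Y (B :\ l))).
  - by apply/eqP => /Y_inj/setP/(_ l); rewrite !inE eqxx lk lB.
  - exact: eBk.
  - by rewrite Y_e hammingD1.
  - by rewrite Y_e hammingC hammingD1 // !inE lk.
  - by rewrite Y_e hammingC setD1C hammingD1 // !inE eq_sym lk.
  - by rewrite dB.
  - by rewrite dBk dBkl.
  - by rewrite dBk dBl.
by move/Y_inj/setP/(_ k); rewrite !inE eqxx kB andbF.
Qed.

Lemma induced_cube_dist Y B C : induced_cube Y -> d (Y B) (Y C) = hamming B C.
Proof.
move=> /(induced_cube_shift B)/(induced_cube_dist0 (symdiff C B)).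
by rewrite /= symdiff0B symdiffK hammingC.
Qed.

End InducedCube.

Section Graded.
Variable z : T.
Local Notation h := (d z).

Definition down_nbrs v := [set a | e v a && ((h a).+1 == h v)].

Lemma graded_subset_isometric (I : finType) (X : {set I} -> T) H :
  (forall B : {set I}, h (X B) + #|B| = H) ->
  (forall (B : {set I}) k, k \notin B -> e (X B) (X (k |: B))) -> subset_isometric X.
Proof.
move=> X_lvl X_up B C BC; apply/eqP; rewrite eqn_leq; apply/andP; split; last first.
  have := dist_triangle z (X C) (X B); rewrite (distC (X C)) cardsDS //.
  by have := X_lvl B; have := X_lvl C; have := subset_leq_card BC; lia.
have [n] := ubnP #|C :\: B|; elim: n C BC => // n IH C BC ltCn.
have [/eqP|[k kCB]] := set_0Vmem (C :\: B).
  rewrite setD_eq0 => CB; have -> : C = B by apply/eqP; rewrite eqEsubset CB.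
  by rewrite distxx.
have [kC kB] := setDP kCB.
have BCk : B \subset C :\ k by rewrite subsetD1 BC.
have ekC : e (X (C :\ k)) (X C) by rewrite -{2}(setD1K kC) X_up // setD11.
have cCk : #|(C :\ k) :\: B| = #|C :\: B|.-1 by rewrite setDDl setDU1r card_setD1.
have pos : (0 < #|C :\: B|)%N by rewrite card_gt0; apply/set0Pn; exists k.
have IHk : (d (X B) (X (C :\ k)) <= #|C :\: B|.-1)%N by rewrite -cCk IH // cCk; lia.
by have := dist_triangle (X B) (X (C :\ k)) (X C); rewrite (dist_edge ekC); lia.
Qed.

Section CubeConstruction.
Variables (n : nat) (v : T) (a : 'I_n -> T).
Hypotheses (a_inj : injective a) (a_down : forall k, a k \in down_nbrs v).
Implicit Types (B C : {set 'I_n}).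

Definition lower_corner x y : T :=
  odflt x [pick c | [&& e x c, e y c & (h c).+1 == h x]].

Lemma lower_cornerP x y t : x != y -> e t x -> e t y -> (h x).+1 = h t -> h y = h x ->
  [/\ e x (lower_corner x y), e y (lower_corner x y) & (h (lower_corner x y)).+1 = h x].
Proof.
move=> xy tx ty Hx Hy; rewrite /lower_corner; case: pickP => [c /and3P[? ? /eqP] //|none].
have [c [xc yc Hc]] := quadrangle tx ty xy (esym Hy) Hx.
by move: (none c); rewrite xc yc Hc eqxx.
Qed.

(* The vertex for B completes the square below the vertices for B :\ k and
   B :\ j, for the first k, j picked in B; by lower_corner_adj the choice is
   irrelevant. *)
Fixpoint cube_vertex_rec m B : T :=
  if m is m'.+1 then
    if [pick k in B] is Some k then
      if [pick j in B :\ k] is Some j then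
        lower_corner (cube_vertex_rec m' (B :\ k)) (cube_vertex_rec m' (B :\ j))
      else a k
    else v
  else v.

Definition cube_vertex B := cube_vertex_rec #|B| B.
Local Notation X := cube_vertex.

Lemma cube_vertex0 : X set0 = v.
Proof. by rewrite /X cards0. Qed.

Lemma cube_vertex1 k : X [set k] = a k.
Proof.
rewrite /X cards1 /=; case: pickP => [k' | /(_ k)]; last by rewrite set11.
by rewrite inE => /eqP ->; case: pickP => [j|//]; rewrite !inE andNb.
Qed.

Lemma cube_vertex_split B : (1 < #|B|)%N -> exists k j, [/\ k \in B, j \in B, k != j &
  X B = lower_corner (X (B :\ k)) (X (B :\ j))].
Proof.
rewrite /X; case E: #|B| => [|m] //= m1.
case: pickP => [k kB | none]; last first.
  have /set0Pn[x xB] : B != set0 by rewrite -card_gt0 E.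
  by rewrite none in xB.
case: pickP => [j jBk | none]; last first.
  have /set0Pn[x xB] : B :\ k != set0 by rewrite -card_gt0 card_setD1 // E.
  by rewrite none in xB.
have [jk jB] := setD1P jBk.
by exists k, j; rewrite eq_sym !card_setD1 // E.
Qed.

Definition cube_ok B := [/\ h (X B) + #|B| = h v,
  forall k, k \in B -> e (X (B :\ k)) (X B) &
  forall k j, k \in B -> j \in B -> k != j -> X (B :\ k) != X (B :\ j)].

Lemma cube_ok_small B : (#|B| <= 1)%N -> cube_ok B.
Proof.
rewrite leq_eqVlt ltnS leqn0 cards_eq0 => /orP[/cards1P[k ->]|/eqP ->].
  have /setIdP[vk /eqP hk] := a_down k.
  split=> [|k' /set1P ->|k1 k2 /set1P -> /set1P ->]; last by rewrite eqxx.
  - by rewrite cube_vertex1 cards1 addn1.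
  - by rewrite setDv cube_vertex0 cube_vertex1.
by split=> [|k|k j]; rewrite ?inE // cube_vertex0 cards0 addn0.
Qed.

Section Step.
Variable B : {set 'I_n}.
Hypothesis IH : forall C, (#|C| < #|B|)%N -> cube_ok C.
Implicit Types (x y : 'I_n).

Lemma cube_ok_sub C x : x \in C -> C \subset B -> cube_ok (C :\ x).
Proof. by move=> xC CB; apply/IH/ltn_card_setD1. Qed.

Lemma level_setD1 C x y : x \in C -> y \in C -> C \subset B ->
  h (X (C :\ x)) = h (X (C :\ y)).
Proof.
move=> xC yC CB; have [hx _ _] := cube_ok_sub xC CB; have [hy _ _] := cube_ok_sub yC CB.
by move: hx hy; rewrite !card_setD1 // => <- /eqP; rewrite eqn_add2r => /eqP.
Qed.

Lemma level_setD2 C x y : x \in C -> y \in C :\ x -> C \subset B ->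
  (h (X (C :\ x))).+1 = h (X (C :\ x :\ y)).
Proof.
move=> xC yCx CB; have [hx _ _] := cube_ok_sub xC CB.
have [hxy _ _] := cube_ok_sub yCx (subset_trans (subD1set C x) CB).
have Cx : (0 < #|C :\ x|)%N by apply/card_gt0P; exists y.
apply/eqP; rewrite -(eqn_add2r #|C :\ x :\ y|) hxy (card_setD1 yCx) addSnnS.
by rewrite prednK // hx.
Qed.

Lemma edge_setD2 C x y : x \in C -> y \in C :\ x -> C \subset B ->
  e (X (C :\ x :\ y)) (X (C :\ x)).
Proof. by move=> xC yCx CB; have [_ E _] := cube_ok_sub xC CB; apply: E. Qed.

Lemma cube_down_distinct k j : k \in B -> j \in B -> k != j -> X (B :\ k) != X (B :\ j).
Proof.
move=> kB jB kj; have jBk : j \in B :\ k by rewrite !inE eq_sym kj.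
have kBj : k \in B :\ j by rewrite !inE kj kB.
have [E0|[l lBkj]] := set_0Vmem (B :\ k :\ j).
  rewrite (setD1_set1 jBk E0) (setD1_set1 kBj); last by rewrite setD1C.
  by rewrite !cube_vertex1 (inj_eq a_inj) eq_sym.
move: (lBkj); rewrite !inE => /and3P[lj lk lB].
have lBk : l \in B :\ k by rewrite !inE lk lB.
have lBj : l \in B :\ j by rewrite !inE lj lB.
have [_ _ dk] := cube_ok_sub kB (subxx B).
have [_ _ dj] := cube_ok_sub jB (subxx B).
have [_ _ dl] := cube_ok_sub lB (subxx B).
have sBk := subD1set B k; have sBj := subD1set B j.
have h1 := level_setD2 kB jBk (subxx B); have h2 := level_setD2 jBk lBkj sBk.
apply/eqP => Eu; apply: (no_K23_level (w := z) (x1 := X (B :\ k))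
  (x2 := X (B :\ k :\ j :\ l)) (c1 := X (B :\ k :\ j)) (c2 := X (B :\ k :\ l))
  (c3 := X (B :\ j :\ l))).
- by rewrite (dk _ _ jBk lBk) // eq_sym.
- by rewrite (setD1C B k) (dj _ _ kBj lBj) // eq_sym.
- by rewrite (setD1C B k) (setD1C B j) dl // !inE ?kj // eq_sym ?lk ?lj.
- exact: level_setD1 jBk lBk sBk.
- by rewrite setD1C; apply: level_setD1 kBj lBj sBj.
- by rewrite e_sym edge_setD2.
- by rewrite e_sym edge_setD2.
- by rewrite Eu e_sym edge_setD2.
- exact: edge_setD2 jBk lBkj sBk.
- by rewrite (setD1C (B :\ k) j l) edge_setD2 // in_setD1 jBk andbT eq_sym.
- by rewrite (setD1C B k j) (setD1C (B :\ j) k l) edge_setD2 // in_setD1 kBj andbT eq_sym.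
- by rewrite -h2 -h1 ltn_eqF // leqW.
Qed.

(* The median of X (B :\ k), X (B :\ j), X (B :\ l) is a common neighbour;
   it cannot lie above them, as it would equal both X (B :\ k :\ j) and
   X (B :\ k :\ l), so by uniqueness of lower corners it is c. *)
Lemma lower_corner_adj k j l c : k \in B -> j \in B -> l \in B ->
  k != j -> l != k -> l != j ->
  e (X (B :\ k)) c -> e (X (B :\ j)) c -> (h c).+1 = h (X (B :\ k)) ->
  e (X (B :\ l)) c.
Proof.
move=> kB jB lB kj lk lj u1c u2c hc.
have kl : k != l by rewrite eq_sym.
have jl : j != l by rewrite eq_sym.
have mem x y : x \in B -> y \in B -> x != y -> y \in B :\ x.
  by move=> xB yB xy; rewrite !inE eq_sym xy yB.
have edge2 x y : x \in B -> y \in B -> x != y -> e (X (B :\ x :\ y)) (X (B :\ x)).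
  by move=> xB yB xy; rewrite edge_setD2 ?mem.
have edge2' x y : x \in B -> y \in B -> x != y -> e (X (B :\ x :\ y)) (X (B :\ y)).
  by move=> xB yB xy; rewrite setD1C edge2 // eq_sym.
have d2 x y : x \in B -> y \in B -> x != y -> d (X (B :\ x)) (X (B :\ y)) = 2.
  move=> xB yB xy; apply: (dist_two_level (w := z) (x := X (B :\ x :\ y))).
  - exact: cube_down_distinct.
  - exact: (level_setD1 xB yB (subxx B)).
  - exact: edge2.
  - exact: edge2'.
have [m [u1m u2m u3m]] :=
  median_of_dist2 (d2 _ _ kB jB kj) (d2 _ _ kB lB kl) (d2 _ _ jB lB jl).
have [hm|hm] := dist_edge_succ z u1m; last first.
  have h21 := level_setD1 jB kB (subxx B).
  have n12 := cube_down_distinct kB jB kj.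
  by rewrite -(lower_nbr_unique (z := z) n12 u1m u2m u1c u2c (esym hm) hc h21).
have up y : y \in B -> k != y -> e (X (B :\ y)) m -> m = X (B :\ k :\ y).
  move=> yB ky ym; apply: (upper_nbr_unique (z := z) (cube_down_distinct kB yB ky) u1m ym).
  - by rewrite e_sym edge2.
  - by rewrite e_sym edge2'.
  - by rewrite hm.
  - exact: level_setD2 kB (mem _ _ kB yB ky) (subxx B).
  - exact: level_setD1 yB kB (subxx B).
have [_ _ dk] := cube_ok_sub kB (subxx B).
move: (dk _ _ (mem _ _ kB jB kj) (mem _ _ kB lB kl) jl).
by rewrite -(up _ jB kj u2m) -(up _ lB kl u3m) eqxx.
Qed.

Lemma cube_ok_step : (1 < #|B|)%N -> cube_ok B.
Proof.
move=> B2; have [k [j [kB jB kj EX]]] := cube_vertex_split B2.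
have jBk : j \in B :\ k by rewrite !inE eq_sym kj.
have kBj : k \in B :\ j by rewrite !inE kj kB.
have [hk _ _] := cube_ok_sub kB (subxx B).
have tu2 : e (X (B :\ k :\ j)) (X (B :\ j)) by rewrite setD1C edge_setD2.
have [c1 c2 c3] := lower_cornerP (cube_down_distinct kB jB kj)
  (edge_setD2 kB jBk (subxx B)) tu2 (level_setD2 kB jBk (subxx B))
  (level_setD1 jB kB (subxx B)).
rewrite -EX in c1 c2 c3; split.
- by rewrite -hk -c3 card_setD1 // addSnnS prednK // ltnW.
- move=> l lB; case: (eqVneq l k) => [->|lk] //; case: (eqVneq l j) => [->|lj] //.
  exact: (lower_corner_adj kB jB lB kj lk lj c1 c2 c3).
- exact: cube_down_distinct.
Qed.

End Step.

Lemma cube_okP B : cube_ok B.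
Proof.
have [m] := ubnP #|B|; elim: m B => // m IH B ltBm.
have [B1|B2] := leqP #|B| 1; first exact: cube_ok_small.
by apply: cube_ok_step B2 => C ltC; apply: IH; apply: leq_trans ltC _.
Qed.

Lemma cube_vertex_level B : h (X B) + #|B| = h v.
Proof. by case: (cube_okP B). Qed.

Lemma cube_vertex_up B k : k \notin B -> e (X B) (X (k |: B)).
Proof.
by move=> kB; case: (cube_okP (k |: B)) => _ /(_ k (setU11 k B)); rewrite setU1K.
Qed.

Lemma cube_vertex_up_injective : up_injective X.
Proof.
move=> B k j kB jB kj; have [_ _ dC] := cube_okP (k |: (j |: B)).
have kjB : k \notin j |: B by rewrite !inE negb_or kj.
have jkB : j \notin k |: B by rewrite !inE negb_or eq_sym kj.
have jC : j \in k |: (j |: B) by rewrite !inE eqxx orbT.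
have := dC k j (setU11 _ _) jC kj.
by rewrite setU1K // setUCA setU1K // eq_sym.
Qed.

Lemma cube_vertex_induced : induced_cube X.
Proof.
apply: isometric_induced_cube cube_vertex_up_injective.
exact: graded_subset_isometric cube_vertex_level cube_vertex_up.
Qed.

End CubeConstruction.

Lemma cube_on_down_nbrs v (A : {set T}) : A \subset down_nbrs v ->
  exists Y : {set 'I_#|A|} -> T, [/\ induced_cube Y, Y set0 = v,
    [set Y [set k] | k : 'I_#|A|] = A & forall B, h (Y B) + #|B| = h v].
Proof.
move=> A_down; pose a (k : 'I_#|A|) : T := enum_val k.
have a_down k : a k \in down_nbrs v by apply: (subsetP A_down); apply: enum_valP.
exists (cube_vertex v a); split.
- exact: cube_vertex_induced enum_val_inj a_down.
- exact: cube_vertex0.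
- apply/setP => x; apply/imsetP/idP => [[k _ ->]|xA].
    by rewrite cube_vertex1 enum_valP.
  by exists (enum_rank_in xA x); rewrite // cube_vertex1 /a enum_rankK_in.
- exact: cube_vertex_level enum_val_inj a_down.
Qed.

Lemma card_down_nbrs_le v : (#|down_nbrs v| <= h v)%N.
Proof.
have [Y [_ _ _ lvl]] := cube_on_down_nbrs (subxx (down_nbrs v)).
by rewrite -(lvl setT) cardsT card_ord leq_addl.
Qed.

Lemma induced_cube_levels (I : finType) (Y : {set I} -> T) : induced_cube Y ->
  (forall B, h (Y B) <= h (Y set0))%N -> forall B, h (Y B) + #|B| = h (Y set0).
Proof.
case=> Y_inj Y_e top B; have [n] := ubnP #|B|.
elim: n B => // n IH B ltBn.
case E: #|B| => [|[|m]].
- by move/eqP: E; rewrite cards_eq0 => /eqP ->; rewrite addn0.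
- move/eqP/cards1P: E => [k ->]; rewrite addn1.
  have e0k : e (Y set0) (Y [set k]) by rewrite Y_e hamming0B cards1.
  by have := top [set k]; case: (dist_edge_succ z e0k) => ->; rewrite ?ltnn.
have [k kB] : exists k, k \in B by apply/set0Pn; rewrite -cards_eq0 E.
have [l lBk] : exists l, l \in B :\ k by apply/set0Pn; rewrite -cards_eq0 card_setD1 // E.
have [lk lB] := setD1P lBk.
have cBk : #|B :\ k| = m.+1 by rewrite card_setD1 // E.
have cBl : #|B :\ l| = m.+1 by rewrite card_setD1 // E.
have cBkl : #|B :\ k :\ l| = m by rewrite card_setD1 // cBk.
have hBk : h (Y (B :\ k)) + m.+1 = h (Y set0) by rewrite -cBk IH // cBk; lia.
have hBl : h (Y (B :\ l)) + m.+1 = h (Y set0) by rewrite -cBl IH // cBl; lia.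
have hBkl : h (Y (B :\ k :\ l)) + m = h (Y set0) by rewrite -cBkl IH // cBkl; lia.
have eBk : e (Y (B :\ k)) (Y B) by rewrite Y_e hammingD1.
have [dB|dB] := dist_edge_succ z eBk; last by clear -dB hBk; lia.
exfalso; have : Y B = Y (B :\ k :\ l).
  apply: (upper_nbr_unique (z := z) (x := Y (B :\ k)) (y := Y (B :\ l))).
  - by apply/eqP => /Y_inj/setP/(_ l); rewrite !inE eqxx lk lB.
  - exact: eBk.
  - by rewrite Y_e hammingD1.
  - by rewrite Y_e hammingC hammingD1 // !inE lk.
  - by rewrite Y_e hammingC setD1C hammingD1 // !inE eq_sym lk.
  - by rewrite dB.
  - by clear -hBk hBkl; lia.
  - by clear -hBk hBl; lia.
by move/Y_inj/setP/(_ k); rewrite !inE eqxx kB andbF.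
Qed.

Definition is_top (S : {set T}) x := (x \in S) && [forall y in S, h y <= h x].
Definition top S := odflt z [pick x | is_top S x].
Definition signature S := (top S, [set y in S | e (top S) y]).
Definition signatures i :=
  [set p : T * {set T} | (p.2 \subset down_nbrs p.1) && (#|p.2| == i)].

Lemma topP (I : finType) (Y : {set I} -> T) :
  exists B0, top (Y @: setT) = Y B0 /\ forall B, (h (Y B) <= h (Y B0))%N.
Proof.
rewrite /top; case: pickP => [x /andP[/imsetP[B0 _ ->] /forall_inP Hx]|none].
  by exists B0; split=> // B; apply/Hx/imset_f.
pose B1 := [arg max_(B > set0) h (Y B)].
suff : is_top (Y @: setT) (Y B1) by rewrite none.
rewrite /is_top imset_f //; apply/forall_inP => _ /imsetP[B _ ->].
by rewrite /B1; case: arg_maxnP => // B2 _; apply.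
Qed.

Lemma top_cube_repr (I : finType) (Y : {set I} -> T) : induced_cube Y ->
  exists Y' : {set I} -> T, [/\ induced_cube Y', Y' @: setT = Y @: setT,
    Y' set0 = top (Y @: setT) & forall B, h (Y' B) + #|B| = h (Y' set0)].
Proof.
move=> Y_cube; have [B0 [topY maxY]] := topP Y.
have Y'_cube := induced_cube_shift B0 Y_cube.
exists (fun B => Y (symdiff B B0)); split=> //.
- apply/setP => y; apply/imsetP/imsetP => [[B _ ->]|[B _ ->]]; first by exists (symdiff B B0).
  by exists (symdiff B B0); rewrite ?symdiffK.
- by rewrite symdiff0B.
- by apply: induced_cube_levels Y'_cube _ => B; rewrite symdiff0B maxY.
Qed.

Lemma cube_nbrs (I : finType) (Y : {set I} -> T) : induced_cube Y ->
  [set y in Y @: setT | e (Y set0) y] = [set Y [set k] | k : I].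
Proof.
case=> _ Y_e; apply/setP => y; rewrite inE; apply/andP/imsetP.
  by case=> /imsetP[B _ ->]; rewrite Y_e hamming0B => /cards1P[k ->]; exists k.
by case=> k _ ->; rewrite imset_f // Y_e hamming0B cards1.
Qed.

Lemma signature_in i S : induces_cube e i S -> signature S \in signatures i.
Proof.
case/induces_cubeP => Y [Y_cube ->].
have [Y' [Y'_cube Im Y'top lvl]] := top_cube_repr Y_cube.
rewrite /signature inE /= -Y'top -Im (cube_nbrs Y'_cube); apply/andP; split.
  apply/subsetP => _ /imsetP[k _ ->]; rewrite inE.
  have := lvl [set k]; rewrite cards1 addn1 => ->; rewrite eqxx andbT.
  by case: Y'_cube => _ ->; rewrite hamming0B cards1.
by rewrite card_imset ?card_ord // => k l /(proj1 Y'_cube)/set1_inj.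
Qed.

(* Induction on B: Y1 B is the common lower neighbour of two vertices Y2 C1 and
   Y2 C2 at Hamming distance 2, and so is Y2 (C1 :|: C2). *)
Lemma cube_incl (I J : finType) (Y1 : {set I} -> T) (Y2 : {set J} -> T) :
  induced_cube Y1 -> induced_cube Y2 -> Y1 set0 = Y2 set0 ->
  (forall B, h (Y1 B) + #|B| = h (Y1 set0)) -> (forall C, h (Y2 C) + #|C| = h (Y2 set0)) ->
  (forall k, exists C, Y1 [set k] = Y2 C) -> forall B, exists C, Y1 B = Y2 C.
Proof.
move=> [Y1_inj Y1_e] Y2_cube E0 lvl1 lvl2 Y1_nbrs B.
have [_ Y2_e] := Y2_cube; have [n] := ubnP #|B|.
elim: n B => // n IH B ltBn.
case E: #|B| => [|[|m]].
- by move/eqP: E; rewrite cards_eq0 => /eqP ->; exists set0.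
- by move/eqP/cards1P: E => [k ->].
have [k kB] : exists k, k \in B by apply/set0Pn; rewrite -cards_eq0 E.
have [l lBk] : exists l, l \in B :\ k by apply/set0Pn; rewrite -cards_eq0 card_setD1 // E.
have [lk lB] := setD1P lBk.
have cBk : #|B :\ k| = m.+1 by rewrite card_setD1 // E.
have cBl : #|B :\ l| = m.+1 by rewrite card_setD1 // E.
have [C1 E1] := IH (B :\ k) (ltac:(lia)).
have [C2 E2] := IH (B :\ l) (ltac:(lia)).
have card_eq C B' : Y1 B' = Y2 C -> #|C| = #|B'|.
  by move=> EC; have := lvl1 B'; have := lvl2 C; rewrite EC -E0; lia.
have c1 : #|C1| = m.+1 by rewrite (card_eq _ _ E1).
have c2 : #|C2| = m.+1 by rewrite (card_eq _ _ E2).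
have e1 : e (Y2 C1) (Y1 B) by rewrite -E1 Y1_e hammingD1.
have e2 : e (Y2 C2) (Y1 B) by rewrite -E2 Y1_e hammingD1.
have n12 : Y2 C1 != Y2 C2.
  by rewrite -E1 -E2; apply/eqP => /Y1_inj/setP/(_ l); rewrite !inE eqxx lk lB.
have h12 : h (Y2 C2) = h (Y2 C1) by have := lvl2 C1; have := lvl2 C2; lia.
have d12 : d (Y2 C1) (Y2 C2) = 2.
  by apply: (dist_two_level (w := z) (x := Y1 B) n12 (esym h12)); rewrite e_sym.
have [hC1 hC2 cU] := hamming2_setU (etrans c1 (esym c2))
  (etrans (esym (induced_cube_dist C1 C2 Y2_cube)) d12).
exists (C1 :|: C2); apply: (lower_nbr_unique (z := z) n12 e1 e2); rewrite ?Y2_e ?hC1 ?hC2 //.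
- by have := lvl1 B; have := lvl1 (B :\ k); rewrite E1 E cBk E0; have := lvl2 C1; lia.
- by have := lvl2 C1; have := lvl2 (C1 :|: C2); rewrite cU c1; lia.
Qed.

Lemma signature_sub i S1 S2 : induces_cube e i S1 -> induces_cube e i S2 ->
  signature S1 = signature S2 -> S1 \subset S2.
Proof.
case/induces_cubeP => Y1 [Y1_cube ->]; case/induces_cubeP => Y2 [Y2_cube ->].
have [Y1' [Y1'_cube Im1 top1 lvl1]] := top_cube_repr Y1_cube.
have [Y2' [Y2'_cube Im2 top2 lvl2]] := top_cube_repr Y2_cube.
rewrite /signature -top1 -top2 -Im1 -Im2 (cube_nbrs Y1'_cube) (cube_nbrs Y2'_cube).
case=> E0 EN; apply/subsetP => _ /imsetP[B _ ->].
have [|C ->] := cube_incl Y1'_cube Y2'_cube E0 lvl1 lvl2 _ B; last exact: imset_f.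
move=> k; have : Y1' [set k] \in [set Y2' [set l] | l : 'I_i].
  by rewrite -EN imset_f.
by case/imsetP=> l _ ->; exists [set l].
Qed.

Lemma signature_onto i p :
  p \in signatures i -> exists2 S, induces_cube e i S & signature S = p.
Proof.
case: p => v A; rewrite inE /= => /andP[A_down /eqP cA]; subst i.
have [Y [Y_cube Y0 Y1 lvl]] := cube_on_down_nbrs A_down.
exists (Y @: setT); first by apply/induces_cubeP; exists Y.
have [B0 [topY maxY]] := topP Y.
have B00 : B0 = set0.
  by apply/eqP; rewrite -cards_eq0; have := maxY set0; have := lvl B0; rewrite Y0; lia.
by rewrite /signature topY B00 (cube_nbrs Y_cube) Y0 Y1.
Qed.

Lemma alpha_eq_sum i : alpha e i = \sum_v 'C(#|down_nbrs v|, i).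
Proof.
have sig_inj : {in [set S | induces_cube e i S] &, injective signature}.
  move=> S1 S2; rewrite !inE => H1 H2 ES; apply/eqP; rewrite eqEsubset.
  by rewrite (signature_sub H1 H2 ES) (signature_sub H2 H1 (esym ES)).
rewrite /alpha -(card_in_imset sig_inj).
have -> : signature @: [set S | induces_cube e i S] = signatures i.
  apply/setP => p; apply/imsetP/idP => [[S]|/signature_onto[S S_cube <-]].
    by rewrite inE => S_cube ->; apply: signature_in.
  by exists S; rewrite ?inE.
rewrite -sum1_card; under [RHS]eq_bigr => v _ do rewrite -cards_draws -sum1_card.
by rewrite pair_big_dep /=; apply: eq_bigl => -[v A]; rewrite !inE.
Qed.

End Graded.

Lemma down_nbrs_eq0 (z v : T) : (down_nbrs z v == set0) = (v == z).
Proof.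
apply/eqP/eqP => [Dn0|->]; last by apply/setP => a; rewrite !inE distxx andbF.
apply/eqP; apply: contraT => vz; have [x vx Hx] := dist_first_step vz.
have : x \in down_nbrs z v by rewrite inE vx !(distC z) Hx eqxx.
by rewrite Dn0 inE.
Qed.

Lemma card_down_nbrs_le_dim (z v : T) : (#|down_nbrs z v| <= cube_dim e)%N.
Proof.
have lt : (#|down_nbrs z v| < #|T|.+1)%N by rewrite ltnS max_card.
apply: (@leq_bigmax_cond _ (fun i : 'I_#|T|.+1 => 0 < alpha e i)%N
  (fun i => val i) (Ordinal lt)).
by rewrite /= (alpha_eq_sum z) (bigD1 v) //= binn.
Qed.

Lemma alpha_cube_dim_gt0 (z : T) : (0 < alpha e (cube_dim e))%N.
Proof.
have alpha0 : (0 < alpha e 0)%N.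
  rewrite (alpha_eq_sum z); under eq_bigr do rewrite bin0.
  by rewrite sum1_card; apply/card_gt0P; exists z.
have [i0] := @eq_bigmax_cond _ (fun i : 'I_#|T|.+1 => 0 < alpha e i)%N
  (fun i => val i) (ltac:(by apply/card_gt0P; exists ord0)).
by rewrite unfold_in /cube_dim => Hi0 E; rewrite [X in alpha e X](_ : _ = val i0).
Qed.

Lemma induced_cube_down_nbrs m (Y : {set 'I_m} -> T) C : induced_cube Y ->
  #|down_nbrs (Y setT) (Y C)| = #|~: C|.
Proof.
move=> Y_cube; have [Y_inj Y_e] := Y_cube.
have hY D : d (Y setT) (Y D) = #|~: D|.
  by rewrite (induced_cube_dist _ _ Y_cube) hammingC /hamming symdiffBT.
apply/eqP; rewrite eqn_leq -{1}hY card_down_nbrs_le /=.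
have -> : #|~: C| = #|[set Y (k |: C) | k in ~: C]|.
  rewrite card_in_imset // => k l; rewrite !inE => kC lC /Y_inj/setP/(_ k).
  by rewrite !inE eqxx (negbTE kC) !orbF => /esym/eqP.
apply/subset_leq_card/subsetP => _ /imsetP[k kC ->]; rewrite inE in kC.
rewrite inE Y_e hammingU1 // !hY /= (cardsD1 k (~: C)) inE kC.
by rewrite add1n setDE setIC -setCU.
Qed.

Lemma down_degrees_of_max_cube : (0 < #|T|)%N ->
  exists z, forall i, (i <= cube_dim e)%N -> exists v, #|down_nbrs z v| = i.
Proof.
case/card_gt0P => z0 _; have /card_gt0P[S] := alpha_cube_dim_gt0 z0.
rewrite inE => /induces_cubeP[Y [Y_cube _]]; exists (Y setT) => i le_i.
have /card_gt0P[A] : (0 < #|[set A : {set 'I_(cube_dim e)} | #|A| == i]|)%N.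
  by rewrite card_draws card_ord bin_gt0.
rewrite inE => /eqP cA; exists (Y (~: A)).
by rewrite (induced_cube_down_nbrs _ Y_cube) setCK.
Qed.

End Median.
End Graph.

Import GRing.Theory Num.Theory.
Local Open Scope ring_scope.

Lemma poly_binomial_sum (T : finType) (N m : nat) (deg : T -> nat) (a : nat -> nat) :
  (forall v, deg v <= m)%N -> (forall v, deg v < N)%N ->
  (forall i, a i = \sum_(v : T) 'C(deg v, i))%N ->
  \poly_(i < N) ((a i)%:R : int) =
  \sum_(i < m.+1) ((#|[set v | deg v == i]|)%:R : int) *: ('X + 1) ^+ i.
Proof.
move=> le_m lt_N a_sum.
transitivity (\sum_(v : T) ('X + 1 : {poly int}) ^+ deg v).
  rewrite poly_def; under eq_bigr => i _ do rewrite a_sum natr_sum scaler_suml.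
  rewrite exchange_big /=; apply: eq_bigr => v _.
  rewrite exprD1n (big_ord_widen N (fun i => 'X^i *+ 'C(deg v, i))) // [RHS]big_mkcond /=.
  apply: eq_bigr => i _; rewrite scaler_nat; case: ifP => // /negbT.
  by rewrite -leqNgt => lt; rewrite bin_small ?mulr0n.
rewrite (partition_big (fun v => inord (deg v) : 'I_m.+1) xpredT) //=.
apply: eq_bigr => j _; rewrite scaler_nat.
rewrite (eq_bigr (fun _ => ('X + 1) ^+ j)) => [|v /eqP <-]; last by rewrite inordK ?ltnS.
rewrite sumr_const; congr (_ *+ _); apply: eq_card => v; rewrite !inE.
by rewrite unfold_in /= inordK ?ltnS.
Qed.

Theorem theorem10 (T : finType) (e : rel T)
  (e_sym : symmetric e) (e_irr : irreflexive e)
  (Hmed : median_graph e) :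
  exists b : nat -> int,
    b 0%N = 1 /\
    (forall i : nat, (i <= cube_dim e)%N -> 0 < b i) /\
    cube_poly e = \sum_(i < (cube_dim e).+1) b i *: ('X + 1) ^+ i.
Proof.
have [[T_gt0 conn] med] := Hmed.
have [z deg_z] := down_degrees_of_max_cube e_sym e_irr conn med T_gt0.
pose deg v := #|down_nbrs conn z v|.
exists (fun i => (#|[set v | deg v == i]|)%:R); split; [|split].
- rewrite (_ : [set v | deg v == 0%N] = [set z]) ?cards1 //.
  by apply/setP => v; rewrite !inE cards_eq0 (down_nbrs_eq0 e_sym e_irr conn).
- move=> i /deg_z[v deg_v]; rewrite ltr0n card_gt0.
  by apply/set0Pn; exists v; rewrite inE /deg deg_v.
- apply: poly_binomial_sum => [v|v|i].
  + exact: card_down_nbrs_le_dim e_sym e_irr conn med z v.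
  + by rewrite ltnS max_card.
  + exact: alpha_eq_sum e_sym e_irr conn med z i.
Qed.
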